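(* Let $n\ge 1$ and $m\ge 2$ be integers with $m\nmid n$, and let $\chi_{n,m}\colon\mathbb{F}_2^n\to\mathbb{F}_2^n$ be given by $\chi_{n,m}(x)=y$ with $y_i=x_i+x_{i+m}(x_{i+m-1}+1)(x_{i+m-2}+1)\cdots(x_{i+1}+1)$ for $i\in\{0,\dots,n-1\}$, indices modulo $n$. Then $\chi_{n,m}$ is an involution (i.e. $\chi_{n,m}\circ\chi_{n,m}$ is the identity) if and only if $n\le 2m-1$. *)

(* Vectors of F_2^n are encoded as finite functions
   {ffun 'I_n -> bool}; F_2 addition is xor (addb), multiplication is &&,
   and (x + 1) is negb x. *)
From mathcomp Require Import all_boot.
Set Implicit Arguments. Unset Strict Implicit. Unset Printing Implicit Defensive.

(* reading the coordinate of index k modulo n, given some i : 'I_n witnessing n > 0 *)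
Definition coord_mod (n : nat) (i : 'I_n) (x : {ffun 'I_n -> bool}) (k : nat) : bool :=
  x (@Ordinal n (k %% n) (ltn_pmod k (leq_ltn_trans (leq0n i) (ltn_ord i)))).

Definition chi (n m : nat) (x : {ffun 'I_n -> bool}) : {ffun 'I_n -> bool} :=
  [ffun i : 'I_n => addb (x i)
     (coord_mod i x (i + m) && \big[andb/true]_(1 <= j < m) ~~ coord_mod i x (i + j))].

(* Say that [flip x k] holds when x_(k+m) = 1 and x_(k+j) = 0 for 0 < j < m,
   so that chi(x)_k = x_k + flip x k; chi is an involution as soon as
   flip (chi x) = flip x.  If n < m, flip is always false (x_(k+m) =
   x_(k+m-n) is one of the zeros) and chi is the identity.  If m < n < 2m,
   two positions k < k + d <= k + m are never both flipped, because one of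
   them would have to see a one where the other sees a zero.  So if no
   position of the window (k, k+m] is flipped, chi does not touch the window
   and flip (chi x) k = flip x k; otherwise flip x k fails, and flip (chi x) k
   fails too, since chi turns a position that flip (chi x) k needs to be 0
   into a 1 or vice versa.  If 2m < n, the vector with ones exactly at m and
   2m is flipped at 0 and at m, so chi clears position m and the second
   application of chi no longer flips position 0.  The cases n = m and
   n = 2m are excluded by m not dividing n. *)
From mathcomp Require Import all_boot zify.
Set Implicit Arguments. Unset Strict Implicit. Unset Printing Implicit Defensive.

Section ChiInvolution.

Variables (n : nat) (n_gt0 : 0 < n).
Implicit Types (x : {ffun 'I_n -> bool}) (k : nat).

Definition cyc x k : bool := x (Ordinal (ltn_pmod k n_gt0)).

Lemma coord_modE (i : 'I_n) x k : coord_mod i x k = cyc x k.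
Proof. by congr (x _); apply: val_inj. Qed.

Lemma cyc_eqmod x a b : a = b %[mod n] -> cyc x a = cyc x b.
Proof. by move=> eq_ab; congr (x _); apply: val_inj. Qed.

Lemma cyc_addn x a : cyc x (a + n) = cyc x a.
Proof. by apply: cyc_eqmod; rewrite modnDr. Qed.

Lemma cyc_ord x (i : 'I_n) : cyc x i = x i.
Proof. by congr (x _); apply: val_inj; rewrite /= modn_small. Qed.

Variable m : nat.

Definition flip x k : bool :=
  cyc x (k + m) && \big[andb/true]_(1 <= j < m) ~~ cyc x (k + j).

Lemma flipP x k :
  reflect (cyc x (k + m) /\ forall j, 0 < j < m -> cyc x (k + j) = false)
          (flip x k).
Proof.
rewrite /flip big_all; apply: (iffP andP) => [[xm /allP xj]|[xm xj]].
  by split=> // j j_range; apply/negbTE/xj; rewrite mem_index_iota.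
by split=> //; apply/allP => j; rewrite mem_index_iota => /xj ->.
Qed.

Lemma flip_eqmod x a b : a = b %[mod n] -> flip x a = flip x b.
Proof.
have shift j : a = b %[mod n] -> a + j = b + j %[mod n].
  by move=> eq_ab; rewrite -modnDml eq_ab modnDml.
move=> eq_ab; rewrite /flip (cyc_eqmod x (shift m eq_ab)).
by congr (_ && _); apply: eq_bigr => j _; rewrite (cyc_eqmod x (shift j eq_ab)).
Qed.

Lemma flip_addn x k : flip x (k + n) = flip x k.
Proof. by apply: flip_eqmod; rewrite modnDr. Qed.

Lemma cyc_chi x k : cyc (chi m x) k = cyc x k (+) flip x k.
Proof.
rewrite {1}/cyc ffunE !coord_modE; congr (_ (+) _).
rewrite -(@flip_eqmod x (k %% n) k) ?modn_mod //.
by congr (_ && _); apply: eq_bigr => j _; rewrite coord_modE.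
Qed.

Lemma eq_flip x y k : 0 < m ->
    (forall j, 0 < j <= m -> cyc y (k + j) = cyc x (k + j)) ->
  flip y k = flip x k.
Proof.
move=> m_gt0 eq_xy.
apply/idP/idP => /flipP[xm xj]; apply/flipP; split.
- by rewrite -eq_xy // m_gt0 leqnn.
- by move=> j j_range; rewrite -eq_xy ?xj //; lia.
- by rewrite eq_xy // m_gt0 leqnn.
- by move=> j j_range; rewrite eq_xy ?xj //; lia.
Qed.

Lemma flip_long_period x k : n < m -> flip x k = false.
Proof.
move=> n_lt_m; apply/negbTE/negP => /flipP[xm xj].
have := xj (m - n) ltac:(lia).
by rewrite -cyc_addn (_ : k + (m - n) + n = k + m) ?xm //; lia.
Qed.

Section ShortPeriod.

Hypotheses (m_lt_n : m < n) (n_lt_2m : n < 2 * m).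

Lemma flip_separated x k d :
  flip x k -> 0 < d <= m -> flip x (k + d) = false.
Proof.
move=> /flipP[xm xj] d_range; apply/negbTE/negP => /flipP[xdm xdj].
have [d_lt_m | d_ge_m] := ltnP d m.
  have := xdj (m - d) ltac:(lia).
  by rewrite (_ : k + d + (m - d) = k + m) ?xm //; lia.
have := xj (2 * m - n) ltac:(lia).
by rewrite -cyc_addn (_ : k + (2 * m - n) + n = k + d + m) ?xdm //; lia.
Qed.

Lemma flip_chi_before_flip x k j :
  0 < j <= m -> flip x (k + j) -> flip (chi m x) k = false.
Proof.
move=> j_range fj; have /flipP[xjm xjj] := fj.
apply/negbTE/negP => /flipP[]; rewrite cyc_chi => cm cj.
have [j_lt_m | j_ge_m] := ltnP j m.
  move: cm; rewrite (_ : k + m = k + j + (m - j)); last by lia.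
  by rewrite xjj ?(flip_separated fj) //; lia.
have := cj (2 * m - n) ltac:(lia).
rewrite cyc_chi -cyc_addn -flip_addn.
rewrite (_ : k + (2 * m - n) + n = k + j + m); last by lia.
by rewrite xjm (flip_separated fj) //; lia.
Qed.

Lemma flip_chi x k : flip (chi m x) k = flip x k.
Proof.
have [/existsP[[j j_lt]] /= /andP[j_gt0 fj] | /existsP no_flip] :=
  boolP [exists j : 'I_m.+1, (0 < val j) && flip x (k + j)].
  have j_range : 0 < j <= m by lia.
  rewrite (flip_chi_before_flip j_range fj).
  by apply/esym/negbTE/negP => fk; rewrite flip_separated in fj.
apply: eq_flip => [|j j_range]; first by lia.
rewrite cyc_chi; case fj: (flip x (k + j)); last exact: addbF.
have j_lt : j < m.+1 by lia.
by case: no_flip; exists (Ordinal j_lt); rewrite /= fj andbT; lia.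
Qed.

End ShortPeriod.

Lemma chi_chi x : n != m -> n < 2 * m -> chi m (chi m x) = x.
Proof.
move=> n_neq_m n_lt_2m; apply/ffunP => i; rewrite -!cyc_ord !cyc_chi.
have [n_lt_m | m_lt_n] := ltnP n m.
  by rewrite !flip_long_period // !addbF.
by rewrite flip_chi ?addbK //; lia.
Qed.

Lemma chi_not_involutive : 0 < m -> 2 * m < n ->
  exists x, chi m (chi m x) != x.
Proof.
move=> m_gt0 two_m_lt_n.
pose x := [ffun i : 'I_n => (val i == m) || (val i == 2 * m)].
have cyc_x a : a < n -> cyc x a = (a == m) || (a == 2 * m).
  by move=> a_lt_n; rewrite /cyc ffunE /= modn_small.
have flip_x0 : flip x 0.
  apply/flipP; split=> [|j j_range]; first by rewrite cyc_x ?eqxx //; lia.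
  by rewrite cyc_x; lia.
have flip_xm : flip x m.
  apply/flipP; split=> [|j j_range]; first by rewrite cyc_x; lia.
  by rewrite cyc_x; lia.
have no_flip_chi_x0 : flip (chi m x) 0 = false.
  apply/negbTE/negP => /flipP[].
  by rewrite cyc_chi add0n flip_xm cyc_x ?eqxx //; lia.
exists x; apply/negP => /eqP /(congr1 (cyc^~ 0)).
by rewrite !cyc_chi no_flip_chi_x0 flip_x0 cyc_x; lia.
Qed.

End ChiInvolution.

Theorem corollary3 (n m : nat) (hn : 1 <= n) (hm : 2 <= m) (hdiv : ~~ (m %| n)) :
  (forall x : {ffun 'I_n -> bool}, chi m (chi m x) = x) <-> n <= 2 * m - 1.
Proof.
have n_neq_m : n != m by apply: contraNneq hdiv => ->.
have n_neq_2m : n != 2 * m by apply: contraNneq hdiv => ->; rewrite dvdn_mull.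
split=> [chi_invol | n_le].
  rewrite leqNgt; apply/negP => n_gt.
  have [m_gt0 two_m_lt_n] : 0 < m /\ 2 * m < n by lia.
  have [x] := chi_not_involutive hn m_gt0 two_m_lt_n.
  by rewrite chi_invol eqxx.
by move=> x; apply: chi_chi => //; lia.
Qed.
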